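(* Let $F,G\in\mathbb{A}$, $\vartheta$ and $\tilde H\in\mathbb{A}_q$ be as in the BQTRU key setting below, so that $\tilde H\equiv F^{-1}\circ G+\vartheta\pmod q$, and let $$\chi=\{\tau'\in\mathbb{A}: \exists F'\in\mathbb{A},\ \exists\alpha'\in\mathbb{A}\ \text{with}\ F\circ F'=F'\circ F\equiv 1+\alpha'\circ\tau'\!\!\pmod q\ \text{and}\ \tilde H\equiv F'\circ G+\tau'\!\!\pmod q\}.$$ Then $\vartheta=W\circ\sigma$ has the smallest Hamming norm $\|\overrightarrow{\rho(\cdot)}\|_H$ among elements of $\chi$. Moreover, for every $\tau'\in\chi$ with $\tau'\neq\vartheta$, $$\|\overrightarrow{\rho(F\circ\tau')}\|_H\ \ge\ \|\overrightarrow{\rho(F\circ\vartheta)}\|_H .$$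
   Context: Setting: $n$ prime, $p,q$ distinct primes with $\gcd(p,q)=\gcd(n,q)=1$ and $n\mid(q-1)$. $R'=\mathbb{Z}[x,y]/\langle x^n-1,y^n-1\rangle$, $R'_q=\mathbb{Z}_q[x,y]/\langle x^n-1,y^n-1\rangle$; $\mathbb{A},\mathbb{A}_q,\mathbb{L}_q$ are the quaternion algebras over $R'$, $R'_q$, $\mathbb{Z}_q$ (free module on $1,i,j,k$, scalars central, $i^2=j^2=1$, $i\circ j=-j\circ i=k$); ''$\pmod q$'' means equality after reducing coefficients mod $q$. $E=\{(a,b)\in\mathbb{Z}_q^2:a^n=b^n=1\}$, enumerated $(a_1,b_1),\dots,(a_{n^2},b_{n^2})$; $\lambda_{a,b}(x,y)=\frac{ab}{n^2}\cdot\frac{x^n-1}{x-a}\cdot\frac{y^n-1}{y-b}$ over $\mathbb{Z}_q$. For $X\in\mathbb{A}$ (reduced mod $q$), $\overrightarrow{\rho(X)}\in\mathbb{Z}_q^{4n^2}$ is $(\rho(x_0),\dots,\rho(x_3))$ with $\rho(x_t)=(x_t(a_1,b_1),\dots,x_t(a_{n^2},b_{n^2}))$; $\|\cdot\|_H$ is Hamming weight. Key setting: $G=g_0+g_1i+g_2j+g_3k$, $F=f_0+f_1i+f_2j+f_3k$ with all $f_t,g_t$ ternary; $T=\bigcap_{t=0}^3\{(a,b)\in E:g_t(a,b)=0\}\neq\emptyset$, enumerated first: $T=\{(a_1,b_1),\dots,(a_{|T|},b_{|T|})\}$; zeros of $N(F)=f_0^2-f_1^2-f_2^2-f_3^2$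 in $E$ lie in $T$. $\sigma=\sum_{i=1}^{|T|}q_i\lambda_{a_i,b_i}$ with $q_i\in\mathbb{Z}_q$ nonzero; $Q=\langle q,\sigma\rangle\subseteq R'$, $J=Q+Qi+Qj+Qk$; $F^{-1}\in\mathbb{A}$ satisfies $F\circ F^{-1}=F^{-1}\circ F\equiv1\pmod J$; $W\in\mathbb{L}_q$ invertible with all four components nonzero; $\vartheta=W\circ\sigma$; $\tilde H\equiv F^{-1}\circ G+\vartheta\pmod q$. *)

From HB Require Import structures.
From mathcomp Require Import all_boot all_order all_algebra.
Set Implicit Arguments. Unset Strict Implicit. Unset Printing Implicit Defensive.
Import Order.TTheory GRing.Theory Num.Theory.
Local Open Scope ring_scope.

(* Elements of R[x,y]/<x^n-1, y^n-1>, represented canonically by their *)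
(* coefficient arrays: f k is the coefficient of x^(k.1) y^(k.2).      *)
(*   R' = RpT int n,   R'_q = RpT 'F_q n.                              *)
Definition RpT (R : Type) (n : nat) := {ffun 'I_n * 'I_n -> R}.

Definition radd (R : nzRingType) n (f g : RpT R n) : RpT R n := [ffun k => f k + g k].
Definition ropp (R : nzRingType) n (f : RpT R n) : RpT R n := [ffun k => - f k].
Definition rzero (R : nzRingType) n : RpT R n := [ffun _ => 0].
Definition rone (R : nzRingType) n : RpT R n :=
  [ffun k => if (nat_of_ord k.1 == 0%N) && (nat_of_ord k.2 == 0%N) then 1 else 0].
Definition rscale (R : nzRingType) n (c : R) (f : RpT R n) : RpT R n := [ffun k => c * f k].
Definition rmul (R : nzRingType) n (f g : RpT R n) : RpT R n :=
  [ffun k => \sum_(i : 'I_n * 'I_n) \sum_(j : 'I_n * 'I_n |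
       (((nat_of_ord i.1 + nat_of_ord j.1) %% n)%N == nat_of_ord k.1)
    && (((nat_of_ord i.2 + nat_of_ord j.2) %% n)%N == nat_of_ord k.2)) f i * g j].

Definition reval (R : nzRingType) n (f : RpT R n) (a b : R) : R :=
  \sum_(k : 'I_n * 'I_n) f k * a ^+ k.1 * b ^+ k.2.

(* Quaternion algebra over a coefficient type T: free module on        *)
(* 1,i,j,k (components 0,1,2,3), i^2 = j^2 = 1, i j = - j i = k.       *)
Definition QuatT (T : Type) := {ffun 'I_4 -> T}.

Definition qmulW (T : Type) (add : T -> T -> T) (opp : T -> T) (mul : T -> T -> T)
    (X Y : QuatT T) : QuatT T :=
  let x t := X (@inord 3 t) in let y t := Y (@inord 3 t) in
  let sub a b := add a (opp b) in
  [ffun t : 'I_4 => match nat_of_ord t with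
    | 0 => sub (add (add (mul (x 0) (y 0)) (mul (x 1) (y 1))) (mul (x 2) (y 2))) (mul (x 3) (y 3))
    | 1 => add (sub (add (mul (x 0) (y 1)) (mul (x 1) (y 0))) (mul (x 2) (y 3))) (mul (x 3) (y 2))
    | 2 => sub (add (add (mul (x 0) (y 2)) (mul (x 2) (y 0))) (mul (x 1) (y 3))) (mul (x 3) (y 1))
    | _ => sub (add (add (mul (x 0) (y 3)) (mul (x 3) (y 0))) (mul (x 1) (y 2))) (mul (x 2) (y 1))
    end].

(* quaternions over R[x,y]/<x^n-1,y^n-1>:  A = AQ int n, A_q = AQ 'F_q n *)
Definition AQ (R : Type) n := QuatT (RpT R n).

Definition qadd (R : nzRingType) n (X Y : AQ R n) : AQ R n := [ffun t => radd (X t) (Y t)].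
Definition qsub (R : nzRingType) n (X Y : AQ R n) : AQ R n := [ffun t => radd (X t) (ropp (Y t))].
Definition qmul (R : nzRingType) n (X Y : AQ R n) : AQ R n :=
  qmulW (@radd R n) (@ropp R n) (@rmul R n) X Y.
Definition qone (R : nzRingType) n : AQ R n :=
  [ffun t : 'I_4 => if nat_of_ord t == 0%N then rone R n else rzero R n].

(* quaternions over a ring R (L_q = QuatT 'F_q) *)
Definition lmul (R : nzRingType) (X Y : QuatT R) : QuatT R :=
  qmulW (fun a b : R => a + b) (fun a : R => - a) (fun a b : R => a * b) X Y.
Definition lone (R : nzRingType) : QuatT R := [ffun t : 'I_4 => if nat_of_ord t == 0%N then 1 else 0].

Definition red (q n : nat) (f : RpT int n) : RpT 'F_q n := [ffun k => (f k)%:~R].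
Definition qred (q n : nat) (X : AQ int n) : AQ 'F_q n := [ffun t => red q (X t)].
(* canonical lift of an element of R'_q to R' (coefficients in [0,q)) *)
Definition lift (q n : nat) (f : RpT 'F_q n) : RpT int n := [ffun k => Posz (nat_of_ord (f k))].

Definition Eset (q n : nat) : {set 'F_q * 'F_q} :=
  [set e | (e.1 ^+ n == 1) && (e.2 ^+ n == 1)].

(* Hamming weight of rho(X) for X in A_q *)
Definition hamq (q n : nat) (X : AQ 'F_q n) : nat :=
  #|[set te : 'I_4 * ('F_q * 'F_q) | (te.2 \in Eset q n) && (reval (X te.1) te.2.1 te.2.2 != 0)]|.

Definition Tset (q n : nat) (G : AQ int n) : {set 'F_q * 'F_q} :=
  [set e in Eset q n | [forall t : 'I_4, reval (red q (G t)) e.1 e.2 == 0]].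

Definition normQ n (F : AQ int n) : RpT int n :=
  let f t := F (@inord 3 t) in
  radd (rmul (f 0%N) (f 0%N))
       (ropp (radd (rmul (f 1%N) (f 1%N)) (radd (rmul (f 2%N) (f 2%N)) (rmul (f 3%N) (f 3%N))))).

(* Lagrange basis lambda_{a,b}(x,y) = ab/n^2 * (x^n-1)/(x-a) * (y^n-1)/(y-b) in R'_q *)
Definition lambdaQ (q n : nat) (e : 'F_q * 'F_q) : RpT 'F_q n :=
  [ffun k => e.1 * e.2 / (n%:R ^+ 2)
             * (('X^n - 1) %/ ('X - e.1%:P))`_(nat_of_ord k.1)
             * (('X^n - 1) %/ ('X - e.2%:P))`_(nat_of_ord k.2)].

Definition sigmaQ (q n : nat) (T : {set 'F_q * 'F_q}) (qs : 'F_q * 'F_q -> 'F_q) : RpT 'F_q n :=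
  [ffun k => \sum_(e in T) qs e * @lambdaQ q n e k].

Definition inQ (q n : nat) (sigma : RpT 'F_q n) (X : RpT int n) : Prop :=
  exists r s : RpT int n, X = radd (rscale (Posz q) r) (rmul s (lift sigma)).
Definition inJ (q n : nat) (sigma : RpT 'F_q n) (X : AQ int n) : Prop :=
  forall t : 'I_4, inQ sigma (X t).

(* vartheta = W o sigma in A_q (sigma central scalar) *)
Definition thetaQ (q n : nat) (W : QuatT 'F_q) (sigma : RpT 'F_q n) : AQ 'F_q n :=
  [ffun t => [ffun k => W t * sigma k]].

Definition chi (q n : nat) (F G : AQ int n) (Ht : AQ 'F_q n) (tau : AQ int n) : Prop :=
  exists F' alpha : AQ int n,
    [/\ qmul F F' = qmul F' F,
        qred q (qmul F F') = qred q (qadd (qone int n) (qmul alpha tau)) &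
        Ht = qred q (qadd (qmul F' G) tau)].

Definition ternary n (f : RpT int n) : Prop := forall k, f k \in [:: -1; 0; 1].

(* At a common zero (a,b) in T of the g_t, evaluating
   H~ = F^-1 G + theta = F' G + tau' (mod q) kills the G-terms, so rho(tau')
   and rho(theta) agree on T; off T, theta = W sigma vanishes because sigma is
   a combination of the Lagrange elements lambda_(a,b) with (a,b) in T.  So at
   every point of E the value of theta (resp. F theta) is either 0 or that of
   tau' (resp. F tau'), which bounds the Hamming weights.  Finally theta itself lies in chi, with
   F' = F^-1 and alpha' = S W^-1, where F F^-1 = 1 + S sigma (mod q) expresses
   F F^-1 - 1 in J: as sigma is central, (S W^-1)(W sigma) = S sigma. *)

From Pilot Require Import Defs.
From HB Require Import structures.
From mathcomp Require Import all_boot all_order all_algebra.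
From mathcomp Require Import ring.
Set Implicit Arguments. Unset Strict Implicit. Unset Printing Implicit Defensive.
Import Order.TTheory GRing.Theory Num.Theory.
Local Open Scope ring_scope.

Lemma qmulW_morph (T U : Type) (addT : T -> T -> T) (oppT : T -> T) (mulT : T -> T -> T)
    (addU : U -> U -> U) (oppU : U -> U) (mulU : U -> U -> U) (phi : T -> U)
    (X Y : QuatT T) (x y : QuatT U) :
  (forall a b, phi (addT a b) = addU (phi a) (phi b)) ->
  (forall a, phi (oppT a) = oppU (phi a)) ->
  (forall i j, phi (mulT (X i) (Y j)) = mulU (x i) (y j)) ->
  forall t, phi (qmulW addT oppT mulT X Y t) = qmulW addU oppU mulU x y t.
Proof.
move=> phiD phiN phiM t; rewrite !ffunE.
by case: t => [[|[|[|[|t]]]] ?] /=; rewrite !phiD ?phiN !phiM ?phiN.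
Qed.

Section QuaternionsOverRing.
Variable R : comNzRingType.
Implicit Types x y z : QuatT R.

Lemma lmulA x y z : lmul (lmul x y) z = lmul x (lmul y z).
Proof.
apply/ffunP => t; rewrite /lmul /qmulW !ffunE !inordK //.
by case: t => [[|[|[|[|t]]]] ?] /=; ring.
Qed.

Lemma lmulr1 x : lmul x (lone R) = x.
Proof.
apply/ffunP => t; rewrite /lmul /qmulW !ffunE !inordK //=.
case: t => [[|[|[|[|t]]]] ?] /=; rewrite ?mulr0 ?mulr1 ?addr0 ?subr0 ?add0r //;
  by congr (x _); apply: val_inj; rewrite /= inordK.
Qed.

Lemma lmulr0 x : lmul x 0 = 0.
Proof.
apply/ffunP => t; rewrite /lmul /qmulW !ffunE.
by case: t => [[|[|[|[|t]]]] ?] /=; rewrite !mulr0 ?addr0 ?subr0.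
Qed.

End QuaternionsOverRing.

Section Reduction.
Variables q n : nat.
Implicit Types (f g : RpT int n) (X Y : AQ int n).

Lemma red_radd f g : red q (radd f g) = radd (red q f) (red q g).
Proof. by apply/ffunP => k; rewrite !ffunE intrD. Qed.

Lemma red_ropp f : red q (ropp f) = ropp (red q f).
Proof. by apply/ffunP => k; rewrite !ffunE intrN. Qed.

Lemma red_rmul f g : red q (rmul f g) = rmul (red q f) (red q g).
Proof.
apply/ffunP => k; rewrite !ffunE rmorph_sum; apply: eq_bigr => i _.
by rewrite rmorph_sum; apply: eq_bigr => j _; rewrite !ffunE rmorphM.
Qed.

Lemma red_rscale_char f : prime q -> red q (rscale (Posz q) f) = rzero 'F_q n.
Proof.
by move=> q_pr; apply/ffunP => k; rewrite !ffunE intrM /= -pmulrn pchar_Fp_0 ?mul0r.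
Qed.

Lemma red_lift (f : RpT 'F_q n) : red q (Defs.lift f) = f.
Proof. by apply/ffunP => k; rewrite !ffunE /= -pmulrn natr_Zp. Qed.

Lemma qred_qadd X Y : qred q (qadd X Y) = qadd (qred q X) (qred q Y).
Proof. by apply/ffunP => t; rewrite !ffunE red_radd. Qed.

Lemma qred_qmul X Y : qred q (qmul X Y) = qmul (qred q X) (qred q Y).
Proof.
apply/ffunP => t; rewrite ffunE; apply: qmulW_morph => [f g|f|i j].
- exact: red_radd.
- exact: red_ropp.
- by rewrite red_rmul !ffunE.
Qed.

Lemma qred_qone : qred q (qone int n) = qone 'F_q n.
Proof.
apply/ffunP => t; rewrite !ffunE; case: ifP => _; apply/ffunP => k; rewrite !ffunE //.
by case: ifP.
Qed.

Definition qlift (X : AQ 'F_q n) : AQ int n := [ffun t => Defs.lift (X t)].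

Lemma qred_qlift (X : AQ 'F_q n) : qred q (qlift X) = X.
Proof. by apply/ffunP => t; rewrite !ffunE red_lift. Qed.

End Reduction.

Section Evaluation.
Variables (R : comNzRingType) (n : nat).
Implicit Types (f g : RpT R n) (X Y : AQ R n).

Lemma reval_radd f g a b : reval (radd f g) a b = reval f a b + reval g a b.
Proof. by rewrite /reval -big_split; apply: eq_bigr => k _; rewrite ffunE !mulrDl. Qed.

Lemma reval_ropp f a b : reval (ropp f) a b = - reval f a b.
Proof. by rewrite /reval -sumrN; apply: eq_bigr => k _; rewrite ffunE !mulNr. Qed.

Lemma reval_rmul f g a b : (0 < n)%N -> a ^+ n = 1 -> b ^+ n = 1 ->
  reval (rmul f g) a b = reval f a b * reval g a b.
Proof.
move=> n_gt0 an1 bn1; rewrite /reval big_distrl /=.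
transitivity (\sum_(i : 'I_n * 'I_n) \sum_(k : 'I_n * 'I_n) \sum_(j : 'I_n * 'I_n |
       ((i.1 + j.1) %% n == k.1)%N && ((i.2 + j.2) %% n == k.2)%N)
    f i * g j * a ^+ k.1 * b ^+ k.2).
  rewrite exchange_big /=; apply: eq_bigr => k _; rewrite ffunE !mulr_suml.
  by apply: eq_bigr => i _; rewrite !mulr_suml.
apply: eq_bigr => i _; rewrite big_distrr /= (exchange_big_dep xpredT) //=.
apply: eq_bigr => j _.
pose ij : 'I_n * 'I_n :=
  (Ordinal (ltn_pmod (i.1 + j.1) n_gt0), Ordinal (ltn_pmod (i.2 + j.2) n_gt0)).
rewrite (big_pred1 ij) /=; last first.
  move=> [k1 k2] /=; rewrite /ij xpair_eqE -!val_eqE /=.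
  by rewrite [_ == (_ %% n)%N]eq_sym [X in _ && X]eq_sym.
rewrite !expr_mod // !exprD; ring.
Qed.

Definition qeval X (e : R * R) : QuatT R := [ffun t => reval (X t) e.1 e.2].

Lemma qeval_qadd X Y e : qeval (qadd X Y) e = qeval X e + qeval Y e.
Proof. by apply/ffunP => t; rewrite !ffunE reval_radd. Qed.

Lemma qeval_qmul X Y e : (0 < n)%N -> e.1 ^+ n = 1 -> e.2 ^+ n = 1 ->
  qeval (qmul X Y) e = lmul (qeval X e) (qeval Y e).
Proof.
move=> n_gt0 e1n e2n; apply/ffunP => t; rewrite ffunE.
pose ev f := reval f e.1 e.2.
by apply: (@qmulW_morph _ _ _ _ _ _ _ _ ev) => [f g|f|i j];
  rewrite /ev ?reval_radd ?reval_ropp ?reval_rmul ?ffunE.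
Qed.

Lemma qeval_qadd_qmul_root X Y Z e : (0 < n)%N -> e.1 ^+ n = 1 -> e.2 ^+ n = 1 ->
  qeval Y e = 0 -> qeval (qadd (qmul X Y) Z) e = qeval Z e.
Proof. by move=> n_gt0 e1n e2n Ye0; rewrite qeval_qadd qeval_qmul // Ye0 lmulr0 add0r. Qed.

End Evaluation.

Lemma horner_divXn_sub1_XsubC (K : fieldType) (n : nat) (a b : K) :
  a ^+ n = 1 -> b ^+ n = 1 -> a != b -> (('X^n - 1) %/ ('X - b%:P)).[a] = 0.
Proof.
move=> an1 bn1 neq_ab.
have dvd_b : ('X - b%:P) %| ('X^n - 1 : {poly K}).
  by rewrite dvdp_XsubCl /root !hornerE bn1 subrr.
have /eqP := congr1 (horner^~ a) (divpK dvd_b).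
by rewrite hornerM !hornerE an1 subrr mulf_eq0 subr_eq0 (negbTE neq_ab) orbF => /eqP.
Qed.

Section Lagrange.
Variables (q n : nat) (n_gt0 : (0 < n)%N).

Lemma reval_lambdaQ_neq (e e' : 'F_q * 'F_q) :
  e \in Eset q n -> e' \in Eset q n -> e != e' -> reval (lambdaQ n e') e.1 e.2 = 0.
Proof.
case: e e' => [a b] [a' b']; rewrite !inE /= => /andP[/eqP an1 /eqP bn1].
move=> /andP[/eqP an1' /eqP bn1'] neq.
pose P c : {poly 'F_q} := ('X^n - 1) %/ ('X - c%:P).
have sum_P c d : d ^+ n = 1 -> c ^+ n = 1 -> d != c -> \sum_(i < n) (P c)`_i * d ^+ i = 0.
  move=> dn1 cn1 neq_dc; rewrite -horner_coef_wide ?horner_divXn_sub1_XsubC //.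
  by rewrite size_divp ?polyXsubC_eq0 // -polyC1 size_XnsubC // size_XsubC subn1.
transitivity (a' * b' / n%:R ^+ 2 *
  ((\sum_(i < n) (P a')`_i * a ^+ i) * (\sum_(j < n) (P b')`_j * b ^+ j))).
  rewrite big_distrl mulr_sumr /=; under [RHS]eq_bigr do rewrite !mulr_sumr.
  rewrite pair_big /reval /=; apply: eq_bigr => k _; rewrite ffunE /P /=; ring.
move: neq; rewrite xpair_eqE negb_and => /orP[neq_a | neq_b].
  by rewrite (sum_P a' a) // mul0r mulr0.
by rewrite (sum_P b' b) // !mulr0.
Qed.

Lemma reval_sigmaQ_notin (T : {set 'F_q * 'F_q}) qs e :
  T \subset Eset q n -> e \in Eset q n -> e \notin T -> reval (sigmaQ n T qs) e.1 e.2 = 0.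
Proof.
move=> TE eE eT; rewrite /reval.
under eq_bigr do rewrite ffunE mulr_suml mulr_suml.
rewrite exchange_big big1 // => e' e'T.
transitivity (qs e' * reval (lambdaQ n e') e.1 e.2).
  by rewrite /reval mulr_sumr; apply: eq_bigr => k _; rewrite !mulrA.
rewrite reval_lambdaQ_neq ?mulr0 //; first exact: (subsetP TE).
by apply: contraNneq eT => ->.
Qed.

End Lagrange.

Section CentralScalars.
Variables (R : comNzRingType) (n : nat) (n_gt0 : (0 < n)%N).
Implicit Types (f g h : RpT R n) (w : QuatT R) (X : AQ R n).

Lemma rmulDl f g h : rmul (radd f g) h = radd (rmul f h) (rmul g h).
Proof.
apply/ffunP => k; rewrite !ffunE -big_split; apply: eq_bigr => i _.
by rewrite -big_split; apply: eq_bigr => j _; rewrite ffunE mulrDl.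
Qed.

Lemma rmulNl f h : rmul (ropp f) h = ropp (rmul f h).
Proof.
apply/ffunP => k; rewrite !ffunE -sumrN; apply: eq_bigr => i _.
by rewrite -sumrN; apply: eq_bigr => j _; rewrite ffunE mulNr.
Qed.

Lemma rmulZl c f h : rmul (rscale c f) h = rscale c (rmul f h).
Proof.
apply/ffunP => k; rewrite !ffunE mulr_sumr; apply: eq_bigr => i _.
by rewrite mulr_sumr; apply: eq_bigr => j _; rewrite ffunE mulrA.
Qed.

Lemma rmulZr c f h : rmul f (rscale c h) = rscale c (rmul f h).
Proof.
apply/ffunP => k; rewrite !ffunE mulr_sumr; apply: eq_bigr => i _.
by rewrite mulr_sumr; apply: eq_bigr => j _; rewrite ffunE mulrCA.
Qed.

Lemma rmul_scale1r c f : rmul f (rscale c (rone R n)) = rscale c f.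
Proof.
apply/ffunP => k; rewrite !ffunE.
pose z : 'I_n := Ordinal n_gt0.
rewrite (bigD1 k) //= [X in _ + X]big1 ?addr0; last first.
  move=> i neq_ik; apply: big1 => j /andP[/eqP i1 /eqP i2].
  rewrite !ffunE; case: ifP; rewrite ?mulr0 // => /andP[/eqP j1 /eqP j2].
  move: i1 i2; rewrite j1 j2 !addn0 !modn_small // => i1 i2.
  by case/eqP: neq_ik; case: i k i1 i2 => [? ?] [? ?] /= ? ?; congr pair; apply: val_inj.
rewrite (bigD1 (z, z)) /=; last by rewrite !addn0 !modn_small ?eqxx.
rewrite [X in _ + X]big1 ?addr0; last first.
  move=> j /andP[_ neq_jz]; rewrite !ffunE.
  case: ifP; rewrite ?mulr0 // => /andP[/eqP j1 /eqP j2].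
  by case/eqP: neq_jz; case: j j1 j2 => [? ?] /= ? ?; congr pair; apply: val_inj.
by rewrite !ffunE /= mulr1 mulrC.
Qed.

Definition qconst w : AQ R n := [ffun t => rscale (w t) (rone R n)].

Definition qmulc X h : AQ R n := [ffun t => rmul (X t) h].

Lemma qmul_qconst_scale X w w' h : lmul w' w = lone R ->
  qmul (qmul X (qconst w')) [ffun t => rscale (w t) h] = qmulc X h.
Proof.
move=> w'w; apply/ffunP => t; apply/ffunP => k; rewrite (ffunE (fun t => rmul (X t) h)).
pose coef f := rmul f h k.
have coef_scale_r A : qmul A [ffun t => rscale (w t) h] t k = lmul [ffun i => coef (A i)] w t.
  apply: (@qmulW_morph _ _ _ _ _ _ _ _ (fun f => f k)) => [f g|f|i j] /=.
  - by rewrite ffunE.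
  - by rewrite ffunE.
  - by rewrite (ffunE (fun t => rscale (w t) h)) rmulZr /rscale /coef !ffunE mulrC.
have coef_qconst_r : [ffun i => coef (qmul X (qconst w') i)] = lmul [ffun l => coef (X l)] w'.
  apply/ffunP => i; rewrite ffunE.
  apply: (@qmulW_morph _ _ _ _ _ _ _ _ coef) => [f g|f|l m]; rewrite /coef.
  - by rewrite rmulDl ffunE.
  - by rewrite rmulNl ffunE.
  - rewrite /qconst (ffunE (fun t => rscale (w' t) (rone R n))) rmul_scale1r rmulZl.
    by rewrite /rscale !ffunE mulrC.
by rewrite coef_scale_r coef_qconst_r lmulA w'w lmulr1 ffunE.
Qed.

End CentralScalars.

Lemma inJ_qred (q n : nat) (s : RpT 'F_q n) (A : AQ int n) :
  prime q -> inJ s (qsub A (qone int n)) ->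
  exists S : AQ 'F_q n, qred q A = qadd (qone 'F_q n) (qmulc S s).
Proof.
move=> q_pr AJ.
have /fin_all_exists [r rP] : forall t, exists r, exists s',
  qsub A (qone int n) t = radd (rscale (Posz q) r) (rmul s' (Defs.lift s)) := AJ.
have /fin_all_exists [s' s'P] := rP.
exists [ffun t => red q (s' t)]; apply/ffunP => t.
have At : A t = radd (radd (rscale (Posz q) (r t)) (rmul (s' t) (Defs.lift s))) (qone int n t).
  by rewrite -s'P; apply/ffunP => k; rewrite !ffunE subrK.
rewrite ffunE At !red_radd red_rscale_char // red_rmul red_lift -qred_qone.
by apply/ffunP => k; rewrite !ffunE add0r addrC.
Qed.

Section Domination.
Variables (q n : nat) (n_gt0 : (0 < n)%N).
Implicit Types X Y Z : AQ 'F_q n.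

Definition dominated X Y :=
  forall e, e \in Eset q n -> qeval X e = 0 \/ qeval X e = qeval Y e.

Lemma hamq_dominated X Y : dominated X Y -> (hamq X <= hamq Y)%N.
Proof.
move=> XY; apply: subset_leq_card; apply/subsetP => -[t e].
rewrite inE /= => /andP[eE Xe_neq0]; rewrite inE /= eE /=.
by case: (XY e eE) => /ffunP/(_ t); rewrite !ffunE => XeE; rewrite XeE ?eqxx in Xe_neq0 *.
Qed.

Lemma dominated_qmull Z X Y : dominated X Y -> dominated (qmul Z X) (qmul Z Y).
Proof.
move=> XY e eE; have := eE; rewrite inE => /andP[/eqP e1n /eqP e2n].
by rewrite !qeval_qmul //; case: (XY e eE) => ->; [left; apply: lmulr0 | right].
Qed.

End Domination.

Section KeySetting.
Variables (q n : nat) (n_gt0 : (0 < n)%N).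
Variables (G : AQ int n) (qs : 'F_q * 'F_q -> 'F_q) (W : QuatT 'F_q).
Local Notation T := (Tset q G).
Local Notation theta := (thetaQ W (sigmaQ n T qs)).

Lemma Tset_sub_Eset : T \subset Eset q n.
Proof. by apply/subsetP => e; rewrite inE => /andP[]. Qed.

Lemma qeval_qred_Tset e : e \in T -> qeval (qred q G) e = 0.
Proof.
rewrite inE => /andP[_ /forallP G_e]; apply/ffunP => t.
by rewrite !ffunE; apply/eqP; exact: G_e.
Qed.

Lemma qeval_thetaQ_notin e : e \in Eset q n -> e \notin T -> qeval theta e = 0.
Proof.
move=> eE eT; apply/ffunP => t; rewrite /qeval ffunE.
have -> : reval (theta t) e.1 e.2 = W t * reval (sigmaQ n T qs) e.1 e.2.
  by rewrite /reval mulr_sumr; apply: eq_bigr => k _; rewrite !ffunE !mulrA.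
by rewrite reval_sigmaQ_notin ?mulr0 ?ffunE // Tset_sub_Eset.
Qed.

Lemma chi_dominated F Finv Ht tau :
  Ht = qadd (qred q (qmul Finv G)) theta -> chi F G Ht tau -> dominated theta (qred q tau).
Proof.
move=> HtE [F' [alpha [_ _ HtE']]] e eE.
have [eT | eT] := boolP (e \in T); last by left; exact: qeval_thetaQ_notin.
right; have := eE; rewrite inE => /andP[/eqP e1n /eqP e2n].
have G_e := qeval_qred_Tset eT.
rewrite -(qeval_qadd_qmul_root (qred q Finv) _ n_gt0 e1n e2n G_e).
rewrite -qred_qmul -HtE HtE' qred_qadd qred_qmul.
exact: qeval_qadd_qmul_root.
Qed.

Lemma thetaQ_in_chi F Finv Ht W' : prime q ->
  qmul F Finv = qmul Finv F -> inJ (sigmaQ n T qs) (qsub (qmul F Finv) (qone int n)) ->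
  lmul W' W = lone 'F_q -> Ht = qadd (qred q (qmul Finv G)) theta ->
  exists tau, chi F G Ht tau /\ qred q tau = theta.
Proof.
move=> q_pr FFinvC FFinvJ W'W HtE.
have [S FFinvE] := inJ_qred q_pr FFinvJ.
exists (qlift theta); split; last exact: qred_qlift.
exists Finv, (qlift (qmul S (qconst n W'))); split => //.
  by rewrite FFinvE qred_qadd qred_qone qred_qmul !qred_qlift (qmul_qconst_scale n_gt0).
by rewrite qred_qadd qred_qlift.
Qed.

End KeySetting.

Theorem proposition2
  (n p q : nat) (F G Finv : AQ int n) (qs : 'F_q * 'F_q -> 'F_q)
  (W : QuatT 'F_q) (Ht : AQ 'F_q n) :
  prime n -> prime p -> prime q -> p != q -> coprime p q -> coprime n q ->
  (n %| q.-1)%N ->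
  (forall t, ternary (F t)) -> (forall t, ternary (G t)) ->
  Tset q G != set0 ->
  (forall e, e \in Eset q n -> reval (red q (normQ F)) e.1 e.2 = 0 -> e \in Tset q G) ->
  (forall e, e \in Tset q G -> qs e != 0) ->
  qmul F Finv = qmul Finv F ->
  inJ (sigmaQ n (Tset q G) qs) (qsub (qmul F Finv) (qone int n)) ->
  (exists W' : QuatT 'F_q, lmul W W' = lone 'F_q /\ lmul W' W = lone 'F_q) ->
  (forall t, W t != 0) ->
  Ht = qadd (qred q (qmul Finv G)) (thetaQ W (sigmaQ n (Tset q G) qs)) ->
  let theta := thetaQ W (sigmaQ n (Tset q G) qs) in
  [/\ exists tau : AQ int n, chi F G Ht tau /\ qred q tau = theta,
      forall tau : AQ int n, chi F G Ht tau -> (hamq theta <= hamq (qred q tau))%N &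
      forall tau : AQ int n, chi F G Ht tau -> qred q tau != theta ->
        (hamq (qmul (qred q F) theta) <= hamq (qred q (qmul F tau)))%N].
Proof.
move=> n_pr _ q_pr _ _ _ _ _ _ _ _ _ FFinvC FFinvJ [W' [_ W'W]] _ HtE theta.
have n_gt0 := prime_gt0 n_pr.
split.
- exact: (thetaQ_in_chi n_gt0 q_pr FFinvC FFinvJ W'W HtE).
- by move=> tau /(chi_dominated n_gt0 HtE) /hamq_dominated.
- move=> tau /(chi_dominated n_gt0 HtE) theta_tau _.
  by rewrite qred_qmul; apply/hamq_dominated/dominated_qmull.
Qed.
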